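(* Suppose the attacker, before receiving Victor's challenge $x$, can pick her own challenge $z$ and obtain a single response $z\boxplus h$. Then the sequence of expected probabilities $\mathrm{Prob}(\mathcal{V}\mid\mathcal{A})$ that the attacker deceives Victor by guessing $x\boxplus h$ is indistinguishable from the sequence $$p_\ell=\sum_{x\in\mathbb{Z}_2^\ell}2^{-\ell}\,G(x,z,z\boxplus h\vdash x\boxplus h)_\ell=\left(\tfrac34\right)^\ell.$$ In particular $\mathrm{Prob}(\mathcal{V}\mid\mathcal{A})$ is negligible.
   Context: Hancke–Kuhn protocol with security parameter $\ell$: shared secret $s$, hash $H$ modeled as a random oracle, counters $a,b$ never reused, token $h=H(s::a::b)=h^{(0)}::h^{(1)}\in\mathbb{Z}_2^{2\ell}$, Victor's uniformly random challenge $x\in\mathbb{Z}_2^\ell$, correct response $x\boxplus h$ with $(x\boxplus h)_i=h^{(x_i)}_i$. $\mathcal{A}$: the event/run in which the responder is an attacker not knowing $s$; $z$ is independent of $x$. $\mathcal{V}$: Victor observes a satisfactory run (sends $x$ and receives the correct response in time). $G(\Xi\vdash\Theta)$ is the guessing chance (maximal probability over randomized guessing procedures of producing $\Theta$ from $\Xi$). Sequences are indistinguishable if they differ by a negligible function $\nu$ (for every polynomial $q$ with non-negative integer coefficients, $\nu(\ell)<1/q(\ell)$ for large $\ell$). *)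

From HB Require Import structures.
From mathcomp Require Import all_boot all_order all_algebra.
Set Implicit Arguments. Unset Strict Implicit. Unset Printing Implicit Defensive.
Import Order.TTheory GRing.Theory Num.Theory.
Local Open Scope ring_scope.

Definition bits (l : nat) := {ffun 'I_l -> bool}.
(* token h = h^(0) :: h^(1) in Z_2^(2l) *)
Definition token (l : nat) := (bits l * bits l)%type.

Definition bplus (l : nat) (x : bits l) (h : token l) : bits l :=
  [ffun i => if x i then h.2 i else h.1 i].

Definition guesser (l : nat) := {ffun bits l * bits l * bits l -> bits l}.

(* Prob_h [ f (x, z, z [+] h) = x [+] h ],  h uniform on Z_2^(2l)
   (H is a random oracle and the counters are fresh). *)
Definition guess_prob (R : realFieldType) (l : nat) (x z : bits l)
  (f : guesser l) : R :=
  #|[set h : token l | f (x, z, bplus z h) == bplus x h]|%:R / 2 ^+ (2 * l).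

Definition G (R : realFieldType) (l : nat) (x z : bits l) : R :=
  \big[Num.max/0]_(f : guesser l) guess_prob R x z f.

Definition p_seq (R : realFieldType) (z : forall l, bits l) (l : nat) : R :=
  \sum_(x : bits l) 2 ^- l * G R x (z l).

Definition attack_success (R : realFieldType) (l : nat) (z : bits l)
  (g : guesser l) : R :=
  \sum_(x : bits l) 2 ^- l * guess_prob R x z g.

Definition ProbVA (R : realFieldType) (l : nat) : R :=
  \big[Num.max/0]_(z : bits l) \big[Num.max/0]_(g : guesser l)
     attack_success R z g.

Definition peval (R : realFieldType) (q : seq nat) (l : nat) : R :=
  \sum_(i < size q) (nth 0%N q i)%:R * l%:R ^+ i.

Definition negligible (R : realFieldType) (nu : nat -> R) : Prop :=
  forall q : seq nat, has (fun c => c != 0%N) q ->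
    exists N : nat, forall l : nat, (N <= l)%N -> `|nu l| < 1 / peval R q l.

Definition indistinguishable (R : realFieldType) (a b : nat -> R) : Prop :=
  negligible (fun l => a l - b l).

(* Write the token as the pair of answers y = z [+] h to the attacker's
   challenge and u to the complementary challenge; h <-> (y, u) is a bijection,
   so y and u are independent and uniform.  At a position where x_i = z_i the
   attacker already knows the answer y_i, elsewhere the answer is the fresh bit
   u_i.  Hence a guesser succeeds with probability at most 2^-k, k being the
   number of disagreements between x and z, and copying y attains it.
   Averaging over x gives (1/2 (1 + 1/2))^l = (3/4)^l, for every choice of z.
   Finally (3/4)^l is negligible because 'C(l, k) 3^(l-k) <= 4^l, so 4^l
   outgrows l^k 3^l. *)

From mathcomp Require Import all_boot all_order all_algebra.
From mathcomp Require Import zify ring.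
Import Order.TTheory GRing.Theory Num.Theory.

Set Implicit Arguments.
Unset Strict Implicit.
Unset Printing Implicit Defensive.

Lemma card_set_sum (T : finType) (P : pred T) :
  #|[set t | P t]| = \sum_t (P t : nat).
Proof. by rewrite -sum1_card big_mkcond /=; apply: eq_bigr => t _; rewrite inE. Qed.

Lemma eq_ffun_prod (I : finType) (T : eqType) (v w : {ffun I -> T}) :
  ((v == w) : nat) = \prod_i ((v i == w i) : nat).
Proof.
have [->|v_neq] := eqVneq v w; first by rewrite big1 // => i _; rewrite eqxx.
have [i /negbTE vi_neq] : exists i, v i != w i.
  apply/existsP; apply: contraR v_neq => /existsPn eq_vw.
  by apply/eqP/ffunP => i; apply/eqP/negPn.
by rewrite (bigD1 i) //= vi_neq.
Qed.

Lemma card_bits (l : nat) : #|{: bits l}| = 2 ^ l.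
Proof. by rewrite card_ffun card_bool card_ord. Qed.

Section Counting.
Variables (l : nat) (x z : bits l).

Definition token_of_answers (p : token l) : token l :=
  ([ffun i => if z i then p.2 i else p.1 i],
   [ffun i => if z i then p.1 i else p.2 i]).

Definition answers (h : token l) : token l :=
  (bplus z h, bplus [ffun i => ~~ z i] h).

Lemma token_of_answersK : cancel token_of_answers answers.
Proof.
by case=> y u; congr pair; apply/ffunP => i; rewrite !ffunE; case: (z i).
Qed.

Lemma bplus_token_of_answers_z p : bplus z (token_of_answers p) = p.1.
Proof. by apply/ffunP => i; rewrite !ffunE; case: (z i). Qed.

Lemma bplus_token_of_answers p :
  bplus x (token_of_answers p) = [ffun i => if x i == z i then p.1 i else p.2 i].
Proof. by apply/ffunP => i; rewrite !ffunE; case: (z i); case: (x i). Qed.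

Definition agree_weight (i : 'I_l) : nat := if x i == z i then 2 else 1.

Definition hits (f : guesser l) : nat :=
  #|[set h : token l | f (x, z, bplus z h) == bplus x h]|.

Lemma hitsE (f : guesser l) : hits f =
  \sum_(y : bits l) \prod_i \sum_(b : bool)
     ((f (x, z, y) i == if x i == z i then y i else b) : nat).
Proof.
rewrite /hits card_set_sum (reindex_inj (can_inj token_of_answersK)) /=.
under eq_bigr => p _ do
  rewrite bplus_token_of_answers_z bplus_token_of_answers eq_ffun_prod.
rewrite -(pair_bigA _ (fun y u : bits l => \prod_i
  ((f (x, z, y) i == [ffun j => if x j == z j then y j else u j] i) : nat))) /=.
apply: eq_bigr => y _.
under eq_bigr => u _ do under eq_bigr => i _ do rewrite ffunE.
by rewrite (bigA_distr_bigA (fun i b =>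
  (f (x, z, y) i == if x i == z i then y i else b) : nat)).
Qed.

Lemma sum_bool_answer (w y a : bool) :
  \sum_(b : bool) ((w == if a then y else b) : nat) = if a then 2 * (w == y) else 1.
Proof. by rewrite big_bool; case: a; case: w; case: y. Qed.

Lemma hits_le (f : guesser l) : hits f <= 2 ^ l * \prod_i agree_weight i.
Proof.
rewrite hitsE -card_bits -sum_nat_const.
apply: leq_sum => y _; apply: leq_prod => i _.
rewrite sum_bool_answer /agree_weight; case: (x i == z i) => //.
by case: (_ == _).
Qed.

Definition copy_guesser : guesser l := [ffun t => t.2].

Lemma hits_copy_guesser : hits copy_guesser = 2 ^ l * \prod_i agree_weight i.
Proof.
rewrite hitsE -card_bits -sum_nat_const.
apply: eq_bigr => y _; apply: eq_bigr => i _.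
by rewrite sum_bool_answer /agree_weight ffunE eqxx.
Qed.

End Counting.

Lemma sum_prod_agree_weight (l : nat) (z : bits l) :
  \sum_(x : bits l) \prod_i agree_weight x z i = 3 ^ l.
Proof.
rewrite /agree_weight -(bigA_distr_bigA (fun i b => if b == z i then 2 else 1)).
rewrite (eq_bigr (fun _ => 3)) ?prod_nat_const ?card_ord // => i _.
by rewrite big_bool; case: (z i).
Qed.

Local Open Scope ring_scope.

Lemma bigmax_attained (R : realFieldType) (T : finType) (F : T -> R) c t0 :
  0 <= c -> (forall t, F t <= c) -> F t0 = c -> \big[Num.max/0]_t F t = c.
Proof.
move=> c_ge0 F_le Ft0; apply: le_anti; rewrite bigmax_le //=.
by rewrite -Ft0 le_bigmax.
Qed.

Section Probabilities.
Variables (R : realFieldType) (l : nat).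

Definition best_guess_prob (x z : bits l) : R :=
  (2 ^ l * \prod_i agree_weight x z i)%:R / 2 ^+ (2 * l).

Lemma guess_prob_le (x z : bits l) (f : guesser l) :
  guess_prob R x z f <= best_guess_prob x z.
Proof. by rewrite ler_wpM2r ?invr_ge0 ?exprn_ge0 // ler_nat hits_le. Qed.

Lemma guess_prob_copy_guesser (x z : bits l) :
  guess_prob R x z (copy_guesser l) = best_guess_prob x z.
Proof. by rewrite /guess_prob /best_guess_prob -hits_copy_guesser. Qed.

Lemma GE (x z : bits l) : G R x z = best_guess_prob x z.
Proof.
apply: (bigmax_attained _ _ (guess_prob_copy_guesser x z)).
  by rewrite divr_ge0 ?exprn_ge0.
exact: guess_prob_le.
Qed.

Lemma sum_best_guess_prob (z : bits l) :
  \sum_(x : bits l) 2 ^- l * best_guess_prob x z = (3 / 4) ^+ l.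
Proof.
have two_l_neq0 : (2 : R) ^+ l != 0 by rewrite expf_neq0 ?pnatr_eq0.
under eq_bigr => x _ do
  rewrite /best_guess_prob natrM natrX !mulrA (mulrC (2 ^- l)) mulfV // mul1r.
rewrite -mulr_suml -natr_sum sum_prod_agree_weight natrX expr_div_n exprM.
by rewrite expr2 -natrM.
Qed.

Lemma attack_success_le (z : bits l) (g : guesser l) :
  attack_success R z g <= (3 / 4) ^+ l.
Proof.
rewrite -(sum_best_guess_prob z); apply: ler_sum => x _.
by rewrite ler_wpM2l ?invr_ge0 ?exprn_ge0 // guess_prob_le.
Qed.

Lemma attack_success_copy_guesser (z : bits l) :
  attack_success R z (copy_guesser l) = (3 / 4) ^+ l.
Proof.
rewrite -(sum_best_guess_prob z); apply: eq_bigr => x _.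
by rewrite guess_prob_copy_guesser.
Qed.

End Probabilities.

Lemma p_seqE (R : realFieldType) (z : forall l, bits l) l :
  p_seq R z l = (3 / 4) ^+ l.
Proof. by rewrite -(sum_best_guess_prob R (z l)); apply: eq_bigr => x _; rewrite GE. Qed.

Lemma ProbVAE (R : realFieldType) l : ProbVA R l = (3 / 4) ^+ l.
Proof.
have ge0 : 0 <= (3 / 4 : R) ^+ l by rewrite exprn_ge0 ?divr_ge0.
have best_attack (z : bits l) :
    \big[Num.max/0]_g attack_success R z g = (3 / 4) ^+ l.
  apply: bigmax_attained ge0 _ (attack_success_copy_guesser R z) => g.
  exact: attack_success_le.
apply: (bigmax_attained ge0 _ (best_attack [ffun=> false])) => z.
by rewrite best_attack.
Qed.

Local Open Scope nat_scope.

Lemma bin_exp3_le_exp4 l m : 'C(l, m) * 3 ^ (l - m) <= 4 ^ l.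
Proof.
have [m_le_l|l_lt_m] := leqP m l; last by rewrite bin_small.
rewrite -[4]/(3 + 1) expnDn (bigD1 (Ordinal (m_le_l : m < l.+1))) //=.
by rewrite exp1n muln1 leq_addr.
Qed.

Lemma exp_subn_le_ffact l k : (l - k) ^ k.+1 <= l ^_ k.+1.
Proof.
elim: k l => [|k IHk] l; first by rewrite subn0 expn1 ffactnS ffactn0 muln1.
rewrite ffactnS expnS leq_mul ?leq_subr //.
by have -> : l - k.+1 = l.-1 - k by lia.
Qed.

Lemma poly_exp3_le_exp4 k :
  exists A, forall l, 2 * k <= l -> l ^ k.+1 * 3 ^ l <= A * 4 ^ l.
Proof.
exists (2 ^ k.+1 * k.+1`! * 3 ^ k.+1) => l kl.
have l_le : l ^ k.+1 <= 2 ^ k.+1 * ('C(l, k.+1) * k.+1`!).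
  rewrite bin_ffact (leq_trans _ (leq_mul (leqnn _) (exp_subn_le_ffact l k))) //.
  by rewrite -expnMn leq_exp2r //; lia.
have exp3_le : 3 ^ l <= 3 ^ (l - k.+1) * 3 ^ k.+1.
  by rewrite -expnD leq_pexp2l //; lia.
apply: (leq_trans (leq_mul l_le exp3_le)).
have -> : 2 ^ k.+1 * ('C(l, k.+1) * k.+1`!) * (3 ^ (l - k.+1) * 3 ^ k.+1)
        = 2 ^ k.+1 * k.+1`! * 3 ^ k.+1 * ('C(l, k.+1) * 3 ^ (l - k.+1)).
  by ring.
by rewrite leq_mul2l bin_exp3_le_exp4 orbT.
Qed.

Lemma poly_exp3_lt_exp4 C k :
  exists N, forall l, N <= l -> C * l ^ k * 3 ^ l < 4 ^ l.
Proof.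
have [A hA] := poly_exp3_le_exp4 k.
exists (2 * k + C * A).+1 => l lN.
have l_gt0 : 0 < l by lia.
rewrite -(ltn_pmul2r l_gt0) (leq_ltn_trans (n := C * (A * 4 ^ l))) //.
  have -> : C * l ^ k * 3 ^ l * l = C * (l ^ k.+1 * 3 ^ l) by rewrite expnSr; ring.
  by rewrite leq_mul2l hA ?orbT //; lia.
by rewrite mulnA [4 ^ l * l]mulnC ltn_pmul2r ?expn_gt0 //; lia.
Qed.

Definition pevaln (q : seq nat) (l : nat) : nat :=
  \sum_(i < size q) nth 0 q i * l ^ i.

Lemma pevalE (R : realFieldType) q l : peval R q l = (pevaln q l)%:R.
Proof. by rewrite /peval natr_sum; apply: eq_bigr => i _; rewrite natrM natrX. Qed.

Lemma pevaln_gt0 q l : has (fun c => c != 0) q -> 0 < l -> 0 < pevaln q l.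
Proof.
move=> /(has_nthP 0) [i i_lt coef_neq0] l_gt0.
rewrite /pevaln (bigD1 (Ordinal i_lt)) //= ltn_addr // muln_gt0 lt0n coef_neq0.
by rewrite expn_gt0 l_gt0.
Qed.

Lemma pevaln_le q l :
  0 < l -> pevaln q l <= (\sum_(i < size q) nth 0 q i) * l ^ size q.
Proof.
move=> l_gt0; rewrite /pevaln big_distrl /=; apply: leq_sum => i _.
by rewrite leq_mul2l leq_pexp2l ?orbT // ltnW.
Qed.

Local Open Scope ring_scope.

Lemma negligible_exp34 (R : realFieldType) : negligible (fun l => (3 / 4 : R) ^+ l).
Proof.
move=> q q_neq0.
have [N hN] := poly_exp3_lt_exp4 (\sum_(i < size q) nth 0 q i) (size q).
exists N.+1 => l lN; have l_gt0 : (0 < l)%N by lia.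
rewrite pevalE ger0_norm ?exprn_ge0 ?divr_ge0 // expr_div_n.
rewrite ltr_pdivlMr ?ltr0n ?pevaln_gt0 // mulrAC ltr_pdivrMr ?exprn_gt0 // mul1r.
rewrite -!natrX -natrM ltr_nat (leq_ltn_trans _ (hN l (ltnW lN))) //.
by rewrite mulnC leq_mul2r pevaln_le ?orbT.
Qed.

Lemma negligible_le_norm (R : realFieldType) (mu nu : nat -> R) :
  (forall l, `|mu l| <= `|nu l|) -> negligible nu -> negligible mu.
Proof.
move=> mu_le nu_neg q q_neq0; have [N hN] := nu_neg q q_neq0.
by exists N => l lN; rewrite (le_lt_trans (mu_le l)) ?hN.
Qed.

Theorem proposition6p6 (R : realFieldType) (z : forall l : nat, bits l) :
  indistinguishable (ProbVA R) (p_seq R z) /\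
  (forall l : nat, p_seq R z l = (3 / 4) ^+ l) /\
  negligible (ProbVA R).
Proof.
have neg34 := negligible_exp34 R.
split; [|split; first exact: p_seqE].
- apply: negligible_le_norm neg34 => l.
  by rewrite ProbVAE p_seqE subrr normr0 normr_ge0.
- by apply: negligible_le_norm neg34 => l; rewrite ProbVAE.
Qed.
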